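(* Let $A\in\mathbb{R}^{n\times n}$ be symmetric with all eigenvalues in $[\mu,L]$, where $0<\mu\le L$, let $b\in\mathbb{R}^n$, and let $f(x)=\frac12 x^\top A x-b^\top x$, with unique minimizer $x^*=A^{-1}b$. Fix a step size $0<\eta\le \frac{2}{L+\mu}$, a window length $m\ge 1$, a regularization parameter $\lambda>0$, and an initial point $x_0\in\mathbb{R}^n$. Let $(x_k)_{k\ge0}$ be generated by Anderson-accelerated gradient descent with relaxation parameter $\beta=1$ (described in the context), and assume $\nabla f(x_k)\neq 0$ for the indices considered. Then for every $k\ge 0$, $$\frac{\|\nabla f(x_{k+1})\|}{\|\nabla f(x_k)\|}\le \delta_k(1-\eta\mu),\qquad \delta_k:=\frac{\|\Pi_k\nabla f(x_k)\|}{\|\nabla f(x_k)\|}\le 1,$$ where $\Pi_k=I-U_k(U_k^\top U_k+\lambda I)^{-1}U_k^\top$. Moreover, for every $k\ge0$, $$\|x_{k+1}-x^*\|\le \Big(\prod_{j=0}^{k}\delta_j\Big)(1-\eta\mu)^{k+1}\frac{L}{\mu}\,\|x_0-x^*\|.$$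
   Context: Norms are Euclidean $\ell^2$ norms (operator norm for matrices). Let $G(x)=x-\eta\nabla f(x)$. Anderson-accelerated gradient descent (AA-GD) with $\beta=1$: set $x_1=G(x_0)$; for $k\ge1$, let $m_k=\min\{m,k\}$, let $U_k=[U_{k,k-m_k},\dots,U_{k,k-1}]\in\mathbb{R}^{n\times m_k}$ with columns $U_{k,j}=\nabla f(x_k)-\nabla f(x_j)$, compute the weights $(\alpha^k_{k-m_k},\dots,\alpha^k_{k-1})^\top=(U_k^\top U_k+\lambda I)^{-1}U_k^\top\nabla f(x_k)$ (the minimizer of $\|\nabla f(x_k)-U_k\alpha\|^2+\lambda\|\alpha\|^2$), set $\alpha^k_k=1-\sum_{j=k-m_k}^{k-1}\alpha^k_j$ (so the weights sum to one), and define $x_{k+1}=\sum_{j=k-m_k}^{k}\alpha^k_j G(x_j)$. For $k=0$ the matrix $U_0$ has no columns, so $\Pi_0=I$ and $\delta_0=1$. *)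

From HB Require Import structures.
From mathcomp Require Import all_boot all_order all_algebra.
From mathcomp Require Import reals.
Set Implicit Arguments. Unset Strict Implicit. Unset Printing Implicit Defensive.
Import Order.TTheory GRing.Theory Num.Theory.
Local Open Scope ring_scope.

Section AAGD.
Variables (R : realType) (n : nat).

Definition norm2 (v : 'cV[R]_n) : R := Num.sqrt (\sum_(i < n) (v i 0) ^+ 2).

Definition quadf (A : 'M[R]_n) (b : 'cV[R]_n) (x : 'cV[R]_n) : R :=
  2^-1 * (x^T *m A *m x) 0 0 - (b^T *m x) 0 0.

(* gradient of f for symmetric A *)
Definition gradf (A : 'M[R]_n) (b : 'cV[R]_n) (x : 'cV[R]_n) : 'cV[R]_n :=
  A *m x - b.

Definition Gmap A b (eta : R) x : 'cV[R]_n := x - eta *: gradf A b x.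

Definition xstar (A : 'M[R]_n) (b : 'cV[R]_n) : 'cV[R]_n := invmx A *m b.

Variables (A : 'M[R]_n) (b : 'cV[R]_n) (eta lam : R) (m : nat).

(* Given the history h (h i = x_i for i <= k), the matrix U_k with columns
   U_{k,j} = grad f(x_k) - grad f(x_j), j = k - m_k, ..., k-1, m_k = minn m k;
   column index j : 'I_(minn m k) corresponds to iterate k - m_k + j. *)
Definition Umat (h : nat -> 'cV[R]_n) (k : nat) : 'M[R]_(n, minn m k) :=
  \matrix_(i < n, j < minn m k)
     (gradf A b (h k) - gradf A b (h (k - minn m k + j)%N)) i 0.

Definition aa_weights (h : nat -> 'cV[R]_n) (k : nat) : 'cV[R]_(minn m k) :=
  invmx ((Umat h k)^T *m Umat h k + lam%:M) *m (Umat h k)^T *m gradf A b (h k).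

Definition aa_next (h : nat -> 'cV[R]_n) (k : nat) : 'cV[R]_n :=
  \sum_(j < minn m k) (aa_weights h k j 0) *: Gmap A b eta (h (k - minn m k + j)%N)
  + (1 - \sum_(j < minn m k) aa_weights h k j 0) *: Gmap A b eta (h k).

(* list [:: x_0; ...; x_k] of AA-GD iterates (for k = 0 the step reduces to
   x_1 = G(x_0) since U_0 has no columns) *)
Fixpoint aa_list (x0 : 'cV[R]_n) (k : nat) : seq 'cV[R]_n :=
  match k with
  | 0 => [:: x0]
  | k'.+1 => let s := aa_list x0 k' in rcons s (aa_next (fun i => nth 0 s i) k')
  end.

Definition aa_seq (x0 : 'cV[R]_n) (k : nat) : 'cV[R]_n := nth 0 (aa_list x0 k) k.

Definition aa_Pi (x0 : 'cV[R]_n) (k : nat) : 'M[R]_n :=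
  let U := Umat (aa_seq x0) k in
  1%:M - U *m invmx (U^T *m U + lam%:M) *m U^T.

Definition aa_delta (x0 : 'cV[R]_n) (k : nat) : R :=
  norm2 (aa_Pi x0 k *m gradf A b (aa_seq x0 k)) / norm2 (gradf A b (aa_seq x0 k)).

End AAGD.

From Pilot Require Import Defs.
From HB Require Import structures.
From mathcomp Require Import all_boot all_order all_algebra.
From mathcomp Require Import reals.
From mathcomp Require Import complex ring lra zify.

(* Since grad f(x) = A x - b is affine and the Anderson weights sum to one, the
   gradient at the new iterate is (I - eta A)(grad f(x_k) - U_k alpha_k)
   = (I - eta A) Pi_k grad f(x_k).  The vector Pi_k grad f(x_k) is the residual of the
   ridge regression that defines alpha_k, hence delta_k <= 1; and for
   eta <= 2/(L + mu) the spectrum of I - eta A lies in [-(1 - eta mu), 1 - eta mu],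
   so I - eta A contracts by 1 - eta mu.  Iterating gives the gradient bound, and
   mu |x - xstar| <= |A (x - xstar)| = |grad f(x)| <= L |x - xstar| turns it into
   the bound on the iterates.  Norms of (alpha I + beta A) v are computed in an
   orthonormal eigenbasis of A, obtained from the complex spectral theorem. *)

Set Implicit Arguments. Unset Strict Implicit. Unset Printing Implicit Defensive.
Import Order.TTheory GRing.Theory Num.Theory.
Local Open Scope ring_scope.

Section SquaredNorm.
Variable R : realType.

Definition sqnorm n (v : 'cV[R]_n) : R := \sum_(i < n) (v i 0) ^+ 2.

Lemma norm2E n (v : 'cV[R]_n) : norm2 v = Num.sqrt (sqnorm v).
Proof. by []. Qed.

Lemma sqnorm_ge0 n (v : 'cV[R]_n) : 0 <= sqnorm v.
Proof. by apply: sumr_ge0 => i _; apply: sqr_ge0. Qed.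

Lemma sqnorm_tr n (v : 'cV[R]_n) : sqnorm v = \tr (v^T *m v).
Proof. by rewrite trace_mx11 mxE; apply: eq_bigr => i _; rewrite mxE expr2. Qed.

Lemma sqnorm_eq0 n (v : 'cV[R]_n) : sqnorm v = 0 -> v = 0.
Proof.
move=> /psumr_eq0P v0; apply/matrixP => i j; rewrite ord1 mxE.
by apply/eqP; rewrite -sqrf_eq0; apply/eqP/v0 => // k _; apply: sqr_ge0.
Qed.

Lemma norm2_ge0 n (v : 'cV[R]_n) : 0 <= norm2 v.
Proof. exact: sqrtr_ge0. Qed.

Lemma norm2_gt0 n (v : 'cV[R]_n) : v != 0 -> 0 < norm2 v.
Proof.
apply: contraNT; rewrite -leNgt => le_v0.
have : norm2 v == 0 by rewrite eq_le le_v0 norm2_ge0.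
rewrite norm2E sqrtr_eq0 => sv0.
by apply/eqP/sqnorm_eq0/le_anti; rewrite sv0 sqnorm_ge0.
Qed.

Lemma norm2_le_scale n p (v : 'cV[R]_n) (w : 'cV[R]_p) K :
  0 <= K -> sqnorm w <= K ^+ 2 * sqnorm v -> norm2 w <= K * norm2 v.
Proof.
move=> K_ge0 le_wv; rewrite !norm2E -[K]ger0_norm // -sqrtr_sqr -sqrtrM ?sqr_ge0 //.
by rewrite ler_sqrt // mulr_ge0 ?sqr_ge0 ?sqnorm_ge0.
Qed.

Lemma norm2_ge_scale n p (v : 'cV[R]_n) (w : 'cV[R]_p) K :
  0 <= K -> K ^+ 2 * sqnorm v <= sqnorm w -> K * norm2 v <= norm2 w.
Proof.
move=> K_ge0 le_vw; rewrite !norm2E -[K]ger0_norm // -sqrtr_sqr -sqrtrM ?sqr_ge0 //.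
by rewrite ler_sqrt // sqnorm_ge0.
Qed.

End SquaredNorm.

Section Spectral.
Local Open Scope sesquilinear_scope.

Lemma spectral_diag_eigenvalue (C : numClosedFieldType) n (A : 'M[C]_n) i :
  A \is normalmx -> eigenvalue A (spectral_diag A 0 i).
Proof.
move=> /orthomx_spectralP A_spectral; set P := spectralmx A; set D := spectral_diag A.
have delta_diag : delta_mx 0 i *m diag_mx D = D 0 i *: delta_mx 0 i :> 'rV_n.
  apply/matrixP => a j; rewrite mul_mx_diag !mxE ord1 eqxx /=.
  by case: eqP => [->|_]; [rewrite mulrC | rewrite mul0r mulr0].
apply/eigenvalueP; exists (delta_mx 0 i *m P).
  by rewrite {1}A_spectral !mulmxA mulmxK ?spectral_unit // delta_diag -scalemxAl.
rewrite mulmx_free_eq0 ?row_free_unit ?spectral_unit //.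
by apply/eqP => /matrixP/(_ 0 i)/eqP; rewrite !mxE !eqxx oner_eq0.
Qed.

Lemma unitary_diag_dotmx (C : numClosedFieldType) n (z q : 'rV[C]_n) (P : 'M[C]_n) :
  P \is unitarymx ->
  let r := z *m diag_mx q *m P in
  dotmx r r = \sum_i (z 0 i * (z 0 i)^*) * (q 0 i * (q 0 i)^*).
Proof.
move=> /unitarymxP P_unitary /=.
rewrite dotmxE trmx_mul map_mxM mulmxA -(mulmxA (z *m diag_mx q)) P_unitary mulmx1 mxE.
by apply: eq_bigr => j _; rewrite mul_mx_diag !mxE rmorphM mulrACA.
Qed.

Variable R : realType.
Local Notation rc := (real_complex R).

Lemma real_complex_real (x : R) : rc x \is Num.real.
Proof. by apply/complex_realP; exists x. Qed.

Lemma realsym_spectral n (A : 'M[R]_n) : A^T = A ->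
  exists (P : 'M[R[i]]_n) (d : 'I_n -> R),
  [/\ P \is unitarymx, forall i, eigenvalue A (d i) &
      A ^ rc = P ^t* *m diag_mx (\row_i rc (d i)) *m P].
Proof.
move=> A_sym; set Ac := A ^ rc.
have Ac_herm : Ac \is hermsymmx.
  apply/is_hermitianmxP; rewrite expr0 scale1r /Ac map_trmx A_sym.
  by apply/matrixP => i j; rewrite !mxE conj_Creal ?real_complex_real.
set P := spectralmx Ac; set D := spectral_diag Ac.
have D_real i : D 0 i = rc (complex.Re (D 0 i)).
  by rewrite RRe_real //; apply: (mxOverP (hermitian_spectral_diag_real Ac_herm)).
exists P, (fun i => complex.Re (D 0 i)); split.
- exact: spectral_unitarymx.
- move=> i; have := spectral_diag_eigenvalue i (hermitian_normalmx Ac_herm).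
  by rewrite -/D D_real eigenvalue_map.
- have -> : \row_i rc (complex.Re (D 0 i)) = D by apply/rowP => i; rewrite mxE -D_real.
  rewrite -invmx_unitary ?spectral_unitarymx //.
  exact/orthomx_spectralP/hermitian_normalmx.
Qed.

Lemma sqnorm_complex n (w : 'cV[R]_n) :
  rc (sqnorm w) = dotmx (map_mx rc w^T) (map_mx rc w^T).
Proof.
rewrite dotmxE /sqnorm rmorph_sum mxE; apply: eq_bigr => i _.
by rewrite !mxE conj_Creal ?real_complex_real // -rmorphM expr2.
Qed.

(* [c v i] is the squared modulus of the i-th coordinate of v in the eigenbasis. *)
Lemma sqnorm_sym_affine n (A : 'M[R]_n) : A^T = A ->
  exists (d : 'I_n -> R) (c : 'cV[R]_n -> 'I_n -> R),
  [/\ forall i, eigenvalue A (d i), forall v i, 0 <= c v i &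
      forall v (al be : R),
      sqnorm ((al%:M + be *: A) *m v) = \sum_i c v i * (al + be * d i) ^+ 2].
Proof.
move=> A_sym; have [P [d [P_unitary d_eig A_spectral]]] := realsym_spectral A_sym.
pose z (v : 'cV[R]_n) := map_mx rc v^T *m P ^t*.
exists d, (fun v i => complex.Re (z v 0 i) ^+ 2 + complex.Im (z v 0 i) ^+ 2).
split => // [v i|v al be]; first by rewrite addr_ge0 ?sqr_ge0.
have PtP : P ^t* *m P = 1%:M by rewrite -invmx_unitary // mulVmx ?unitarymx_unit.
set q := \row_i rc (al + be * d i).
have diag_q : diag_mx q = (rc al)%:M + rc be *: diag_mx (\row_i rc (d i)).
  apply/matrixP => a j; rewrite !mxE.
  by case: eqP => [->|_]; rewrite ?mulr1n ?mulr0n ?mulr0 ?addr0 // rmorphD rmorphM.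
have affine_spectral : map_mx rc (al%:M + be *: A) = P ^t* *m diag_mx q *m P.
  rewrite diag_q mulmxDr mulmxDl mul_mx_scalar -scalemxAl PtP scalemx1.
  by rewrite -scalemxAr -scalemxAl -A_spectral map_mxD map_mxZ map_scalar_mx.
have affine_v : map_mx rc ((al%:M + be *: A) *m v)^T = z v *m diag_mx q *m P.
  rewrite trmx_mul linearD linearZ /= tr_scalar_mx A_sym map_mxM affine_spectral.
  by rewrite /z !mulmxA.
apply: complexI; rewrite sqnorm_complex affine_v unitary_diag_dotmx //.
rewrite rmorph_sum; apply: eq_bigr => i _; rewrite rmorphM /= add_Re2_Im2 normCK.
by rewrite expr2 rmorphM /= [q 0 i]mxE (conj_Creal (real_complex_real _)).
Qed.
End Spectral.

Lemma unitmx_eigenvalue0 (F : fieldType) n (A : 'M[F]_n) :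
  (A \in unitmx) = ~~ eigenvalue A 0.
Proof. by rewrite /eigenvalue /eigenspace raddf0 subr0 negbK kermx_eq0 row_free_unit. Qed.

Section SymmetricBounds.
Variables (R : realType) (n : nat) (A : 'M[R]_n).
Hypothesis A_sym : A^T = A.

Lemma norm2_sym_affine_le (al be K : R) v : 0 <= K ->
  (forall d, eigenvalue A d -> (al + be * d) ^+ 2 <= K ^+ 2) ->
  norm2 ((al%:M + be *: A) *m v) <= K * norm2 v.
Proof.
move=> K_ge0 K_bound; have [d [c [d_eig c_ge0 sqnormE]]] := sqnorm_sym_affine A_sym.
apply: norm2_le_scale => //.
have -> : sqnorm v = sqnorm ((1%:M + 0 *: A) *m v) by rewrite scale0r addr0 mul1mx.
rewrite !sqnormE mulr_sumr; apply: ler_sum => i _.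
rewrite mul0r addr0 expr1n mulr1 mulrC; apply: ler_wpM2r; [exact: c_ge0 | exact/K_bound/d_eig].
Qed.

Lemma norm2_sym_affine_ge (al be K : R) v : 0 <= K ->
  (forall d, eigenvalue A d -> K ^+ 2 <= (al + be * d) ^+ 2) ->
  K * norm2 v <= norm2 ((al%:M + be *: A) *m v).
Proof.
move=> K_ge0 K_bound; have [d [c [d_eig c_ge0 sqnormE]]] := sqnorm_sym_affine A_sym.
apply: norm2_ge_scale => //.
have -> : sqnorm v = sqnorm ((1%:M + 0 *: A) *m v) by rewrite scale0r addr0 mul1mx.
rewrite !sqnormE mulr_sumr; apply: ler_sum => i _.
rewrite mul0r addr0 expr1n mulr1 mulrC; apply: ler_wpM2l; [exact: c_ge0 | exact/K_bound/d_eig].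
Qed.

Variables (mu L : R).
Hypotheses (mu_gt0 : 0 < mu) (mu_le_L : mu <= L).
Hypothesis A_spec : forall a, eigenvalue A a -> mu <= a <= L.

Lemma sym_unitmx : A \in unitmx.
Proof. by rewrite unitmx_eigenvalue0; apply/negP => /A_spec; rewrite leNgt mu_gt0. Qed.

Lemma norm2_sym_mul_ge v : mu * norm2 v <= norm2 (A *m v).
Proof.
rewrite -[A]scale1r -[1 *: A]add0r -(raddf0 (@scalar_mx R n)).
apply: norm2_sym_affine_ge => [|d /A_spec /andP[d_ge _]]; first exact: ltW.
by rewrite add0r mul1r !expr2 ler_pM // ltW.
Qed.

Lemma norm2_sym_mul_le v : norm2 (A *m v) <= L * norm2 v.
Proof.
rewrite -[A]scale1r -[1 *: A]add0r -(raddf0 (@scalar_mx R n)).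
apply: norm2_sym_affine_le => [|d /A_spec /andP[d_ge d_le]].
  exact: le_trans (ltW mu_gt0) mu_le_L.
by rewrite add0r mul1r !expr2 ler_pM // (le_trans (ltW mu_gt0)).
Qed.

Lemma norm2_gd_contraction (eta : R) v : 0 < eta -> eta <= 2 / (L + mu) ->
  norm2 ((1%:M - eta *: A) *m v) <= (1 - eta * mu) * norm2 v.
Proof.
(* lra and nra ignore section hypotheses, hence the explicit [have]s. *)
have := mu_gt0; have := mu_le_L => ? ? eta_gt0.
rewrite ler_pdivlMr; last by lra.
move=> eta_le; rewrite -scaleNr.
apply: norm2_sym_affine_le => [|d /A_spec /andP[d_ge d_le]]; first by nra.
(* (1 - eta d)^2 <= (1 - eta mu)^2 is eta (d - mu) (eta (d + mu) - 2) <= 0. *)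
have step_ge : 0 <= eta * (d - mu) by nra.
have step_le : eta * (d + mu) <= 2 by nra.
nra.
Qed.

End SymmetricBounds.

Section Ridge.
Variables (R : realType) (n p : nat) (U : 'M[R]_(n, p)) (lam : R).
Hypothesis lam_gt0 : 0 < lam.

Lemma tr_gram_ridge (a : 'cV[R]_p) :
  \tr (a^T *m ((U^T *m U + lam%:M) *m a)) = sqnorm (U *m a) + lam * sqnorm a.
Proof.
by rewrite mulmxDl mulmxDr mul_scalar_mx -scalemxAr mxtraceD mxtraceZ !sqnorm_tr trmx_mul !mulmxA.
Qed.

Lemma ridge_gram_unitmx : U^T *m U + lam%:M \in unitmx.
Proof.
rewrite -row_free_unit; apply: inj_row_free => v v_ker.
have := tr_gram_ridge v^T; rewrite trmxK mulmxA v_ker mul0mx mxtrace0 => /esym tr0.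
have /sqnorm_eq0 /(congr1 trmx) : sqnorm v^T = 0.
  by have := lam_gt0; have := sqnorm_ge0 (U *m v^T); have := sqnorm_ge0 v^T; nra.
by rewrite trmxK trmx0.
Qed.

Lemma sqnorm_sub_mulmx (g : 'cV[R]_n) (a : 'cV[R]_p) :
  sqnorm (g - U *m a) = sqnorm g - 2 * \tr (a^T *m (U^T *m g)) + sqnorm (U *m a).
Proof.
rewrite !sqnorm_tr [(g - _)^T]linearB /= mulmxBl !mulmxBr !raddfB /=.
rewrite -[\tr (g^T *m (U *m a))]mxtrace_tr !trmx_mul trmxK !mulmxA.
ring.
Qed.

(* With a the ridge solution, a^T U^T g = |U a|^2 + lam |a|^2, so that
   |g - U a|^2 = |g|^2 - |U a|^2 - 2 lam |a|^2. *)
Lemma norm2_ridge_residual_le (g : 'cV[R]_n) :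
  norm2 ((1%:M - U *m invmx (U^T *m U + lam%:M) *m U^T) *m g) <= norm2 g.
Proof.
rewrite mulmxBl mul1mx -!mulmxA; set a := invmx _ *m _.
have Ma : (U^T *m U + lam%:M) *m a = U^T *m g by rewrite mulKVmx ?ridge_gram_unitmx.
rewrite -[norm2 g]mul1r; apply: norm2_le_scale => //; rewrite expr1n mul1r.
rewrite sqnorm_sub_mulmx -Ma tr_gram_ridge.
by have := lam_gt0; have := sqnorm_ge0 (U *m a); have := sqnorm_ge0 a; nra.
Qed.

End Ridge.

Section AndersonStep.
Variables (R : realType) (n : nat) (A : 'M[R]_n) (b : 'cV[R]_n) (eta lam : R) (m : nat).
Local Notation gradf := (gradf A b).
Local Notation Gmap := (Gmap A b eta).
Local Notation aa_next := (aa_next A b eta lam m).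
Local Notation aa_seq := (aa_seq A b eta lam m).

Lemma gradfD x y : gradf (x + y) = gradf x + A *m y.
Proof. by rewrite /Defs.gradf mulmxDr addrAC. Qed.

Lemma gradfB x y : gradf x - gradf y = A *m (x - y).
Proof. by rewrite /Defs.gradf mulmxBr opprB addrA subrK. Qed.

Lemma gradf_Gmap x : gradf (Gmap x) = (1%:M - eta *: A) *m gradf x.
Proof.
by rewrite /Defs.Gmap /Defs.gradf mulmxBl mul1mx -scalemxAl mulmxBr -scalemxAr addrAC.
Qed.

Lemma gradf_aa_next h k :
  gradf (aa_next h k)
  = (1%:M - eta *: A) *m (gradf (h k) - Umat A b m h k *m aa_weights A b lam m h k).
Proof.
set N := minn m k; set al := aa_weights A b lam m h k.
have next_affine : aa_next h k
    = Gmap (h k) + \sum_(j < N) al j 0 *: (Gmap (h (k - N + j)%N) - Gmap (h k)).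
  rewrite /Defs.aa_next -/N -/al scalerBl scale1r scaler_suml.
  under [X in _ = _ + X]eq_bigr do rewrite scalerBr.
  by rewrite sumrB addrCA.
have U_al : Umat A b m h k *m al
    = \sum_(j < N) al j 0 *: (gradf (h k) - gradf (h (k - N + j)%N)).
  apply/matrixP => i j; rewrite ord1 !mxE summxE; apply: eq_bigr => l _.
  by rewrite !mxE mulrC.
rewrite next_affine gradfD gradf_Gmap U_al -sumrN [in RHS]mulmxDr !mulmx_sumr; congr (_ + _).
apply: eq_bigr => j _; rewrite -scalemxAr -gradfB !gradf_Gmap -mulmxBr scalemxAr.
by rewrite -[- (al j 0 *: _)]scalerN (opprB (gradf (h k))).
Qed.

Lemma size_aa_list x0 k : size (aa_list A b eta lam m x0 k) = k.+1.
Proof. by elim: k => //= k IH; rewrite size_rcons IH. Qed.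

Lemma aa_seqE x0 k i : (i <= k)%N ->
  aa_seq x0 i = nth 0 (aa_list A b eta lam m x0 k) i.
Proof.
elim: k => [|k IH]; first by rewrite leqn0 => /eqP ->.
rewrite leq_eqVlt => /orP [/eqP -> //|i_le_k].
by rewrite /= nth_rcons size_aa_list i_le_k IH.
Qed.

Lemma eq_aa_next h h' k :
  (forall i, (i <= k)%N -> h i = h' i) -> aa_next h k = aa_next h' k.
Proof.
move=> eq_hh'.
have eq_win (j : 'I_(minn m k)) : h (k - minn m k + j)%N = h' (k - minn m k + j)%N.
  by apply: eq_hh'; have := ltn_ord j; lia.
have eq_k : h k = h' k by apply: eq_hh'.
have eq_U : Umat A b m h k = Umat A b m h' k.
  by apply/matrixP => i j; rewrite !mxE eq_win eq_k.
rewrite /Defs.aa_next /aa_weights eq_U eq_k; congr (_ + _).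
by apply: eq_bigr => j _; rewrite eq_win.
Qed.

Lemma aa_seqS x0 k : aa_seq x0 k.+1 = aa_next (aa_seq x0) k.
Proof.
rewrite /Defs.aa_seq /= nth_rcons size_aa_list ltnn eqxx.
by apply: eq_aa_next => i i_le_k; rewrite -aa_seqE.
Qed.

Lemma gradf_aa_seqS x0 k :
  gradf (aa_seq x0 k.+1)
  = (1%:M - eta *: A) *m (aa_Pi A b eta lam m x0 k *m gradf (aa_seq x0 k)).
Proof.
rewrite aa_seqS gradf_aa_next /aa_Pi; congr (mulmx _ _).
by rewrite mulmxBl mul1mx /aa_weights !mulmxA.
Qed.

End AndersonStep.

Lemma ler_prod_step (R : numDomainType) (a r : nat -> R) K :
  (forall k, 0 <= a k) -> (forall k, (k <= K)%N -> r k.+1 <= a k * r k) ->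
  r K.+1 <= (\prod_(j < K.+1) a j) * r 0%N.
Proof.
move=> a_ge0; elim: K => [|K IH] step; first by rewrite big_ord1 step.
apply: le_trans (step _ (leqnn _)) _.
rewrite big_ord_recr /= [_ * a K.+1]mulrC -mulrA; apply: ler_wpM2l => //.
by apply: IH => k k_le; apply: step; apply: leqW.
Qed.

Lemma gradf_xstar (R : realType) n (A : 'M[R]_n) (A_unit : A \in unitmx) b x :
  gradf A b x = A *m (x - xstar A b).
Proof. by rewrite mulmxBr /xstar mulmxA mulmxV // mul1mx. Qed.

Unset Implicit Arguments.

Theorem theorem3p1 (R : realType) (n : nat) (A : 'M[R]_n) (b : 'cV[R]_n)
    (mu L eta lam : R) (m : nat) (x0 : 'cV[R]_n) :
  A^T = A ->
  0 < mu -> mu <= L ->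
  (forall a : R, eigenvalue A a -> mu <= a <= L) ->
  0 < eta -> eta <= 2 / (L + mu) ->
  (1 <= m)%N ->
  0 < lam ->
  let x := aa_seq A b eta lam m x0 in
  let g := fun k => gradf A b (x k) in
  let delta := aa_delta A b eta lam m x0 in
  (forall k : nat, g k != 0 ->
     norm2 (g k.+1) / norm2 (g k) <= delta k * (1 - eta * mu)
     /\ delta k <= 1)
  /\
  (forall k : nat, (forall j : nat, (j <= k)%N -> g j != 0) ->
     norm2 (x k.+1 - xstar A b)
       <= (\prod_(j < k.+1) delta j) * (1 - eta * mu) ^+ k.+1 * (L / mu)
          * norm2 (x0 - xstar A b)).
Proof.
move=> A_sym mu_gt0 mu_le_L A_spec eta_gt0 eta_le _ lam_gt0 x g delta.
have rate_ge0 : 0 <= 1 - eta * mu.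
  by move: eta_le; rewrite ler_pdivlMr; nra.
have Pi_g k : norm2 (aa_Pi A b eta lam m x0 k *m g k) <= norm2 (g k).
  exact: norm2_ridge_residual_le.
have delta_ge0 k : 0 <= delta k by rewrite divr_ge0 ?norm2_ge0.
have step k : g k != 0 -> norm2 (g k.+1) <= delta k * (1 - eta * mu) * norm2 (g k).
  move=> g_neq0; rewrite /g gradf_aa_seqS -mulrA mulrCA divfK ?gt_eqF ?norm2_gt0 //.
  exact: (norm2_gd_contraction A_sym mu_gt0 mu_le_L A_spec _ eta_gt0 eta_le).
split=> [k g_neq0|K g_neq0].
  by rewrite !ler_pdivrMr ?norm2_gt0 // ?step // mul1r Pi_g.
have A_unit := sym_unitmx mu_gt0 A_spec.
have := ler_prod_step (fun k => mulr_ge0 (delta_ge0 k) rate_ge0)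
  (fun k k_le => step k (g_neq0 k k_le)).
rewrite big_split prodr_const card_ord /g !(gradf_xstar A_unit) /= => g_bound.
rewrite mulrA mulrAC ler_pdivlMr // mulrC.
apply: le_trans (norm2_sym_mul_ge A_sym mu_gt0 A_spec _) _.
apply: le_trans g_bound _; rewrite -[_ * L * _]mulrA; apply: ler_wpM2l.
  by rewrite mulr_ge0 ?exprn_ge0 // prodr_ge0.
exact: (norm2_sym_mul_le A_sym mu_gt0 mu_le_L A_spec (x0 - xstar A b)).
Qed.
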